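(* Let $S$ be a numerical semigroup with $\mathrm{msg}(S)=\{n_1<n_2<\cdots<n_e<n_{e+1}\}$, where $e\geq 2$, and let $S'=\langle n_1,n_2,\ldots,n_e\rangle$ with $\mathrm{Ap}(S',n_1)=\{w'(0),w'(1),\ldots,w'(n_1-1)\}$, where $w'(i)$ is the least element of $S'$ congruent to $i$ modulo $n_1$. Then $S$ is a MANS-semigroup if and only if all of the following hold: (1) $S'$ is a MANS-semigroup; (2) $n_e \bmod n_1 < n_{e+1}\bmod n_1$; (3) $w'(n_{e+1}\bmod n_1-1)<n_{e+1}<w'(n_{e+1}\bmod n_1)$.
   Context: $\mathbb{N}=\{0,1,2,\ldots\}$. A numerical semigroup is a subset $S\subseteq\mathbb{N}$ closed under addition, containing $0$, with $\mathbb{N}\setminus S$ finite. $\langle A\rangle$ denotes the submonoid of $(\mathbb{N},+)$ generated by $A$. $\mathrm{msg}(S)$ is the (unique, finite) minimal system of generators of $S$. The multiplicity $\mathrm{m}(S)$ is the least element of $S\setminus\{0\}$. For $n\in S\setminus\{0\}$, $\mathrm{Ap}(S,n)=\{s\in S: s-n\notin S\}=\{w(0),\ldots,w(n-1)\}$ with $w(i)$ the least element of $S$ congruent to $i$ modulo $n$. $S$ is a MANS-semigroup if $w(1)<w(2)<\cdots<w(\mathrm{m}(S)-1)$ for the elements $w(i)$ of $\mathrm{Ap}(S,\mathrm{m}(S))$. $a\bmod b$ is the remainder of the division of $a$ by $b$. *)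

From mathcomp Require Import all_boot.
Set Implicit Arguments. Unset Strict Implicit. Unset Printing Implicit Defensive.

Definition numerical_semigroup (S : nat -> Prop) : Prop :=
  [/\ S 0, (forall x y, S x -> S y -> S (x + y))
    & exists N, forall x, N <= x -> S x].

Inductive gen (A : seq nat) : nat -> Prop :=
| gen0 : gen A 0
| genS : forall a x, a \in A -> gen A x -> gen A (a + x).

Definition in_msg (S : nat -> Prop) (x : nat) : Prop :=
  [/\ S x, 0 < x &
      ~ (exists a b, [/\ S a, S b, 0 < a, 0 < b & x = a + b])].

Definition is_mult (S : nat -> Prop) (m : nat) : Prop :=
  [/\ S m, 0 < m & forall s, S s -> 0 < s -> m <= s].

Definition is_apery (S : nat -> Prop) (n i w : nat) : Prop :=
  [/\ S w, w %% n = i %% n &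
      forall s, S s -> s %% n = i %% n -> w <= s].

Definition MANS (S : nat -> Prop) : Prop :=
  numerical_semigroup S /\
  forall m, is_mult S m ->
    forall i wi wj, 1 <= i -> i.+1 <= m - 1 ->
      is_apery S m i wi -> is_apery S m i.+1 wj -> wi < wj.

(* Let m = n_1, n = n_{e+1} and r = n mod m.  Every element of S lies in S' or
   is n plus an element of S, so S and S' agree below n; being a minimal
   generator, n is the Apery element w(r) of S, and n is not in S'.
   If S is MANS, then w(j) < w(r) = n for j < r, so these elements lie in S':
   w(1) makes S' numerical and w(r - 1) gives (3); (2) holds since otherwise
   n = w(r) <= w(n_e mod m) = n_e; and S' is MANS because the last generator a of
   w'(i + 1) can be traded for the smaller w(a mod m - 1), reaching class i.
   Conversely, (1) and (3) give w(j) <= w'(j) < n for 0 < j < r, w(r) = n, and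
   for i >= r an Apery element of S outside S' is n plus an element of class
   i + 1 - r, so monotonicity propagates by strong induction on i. *)

From mathcomp Require Import all_boot zify.
From Stdlib Require Import Classical.
Set Implicit Arguments. Unset Strict Implicit. Unset Printing Implicit Defensive.

Lemma ex_least (P : nat -> Prop) :
  (exists n, P n) -> exists n, P n /\ forall k, P k -> n <= k.
Proof.
move=> [n Pn]; elim/ltn_ind: n Pn => n IH Pn.
have [[k [kn Pk]] | no_less] := classic (exists k, k < n /\ P k).
  exact: IH Pk.
exists n; split=> // k Pk; rewrite leqNgt; apply/negP=> kn.
by apply: no_less; exists k.
Qed.

Lemma numerical_mul T x k : numerical_semigroup T -> T x -> T (k * x).
Proof.
by case=> T0 Tadd _ Tx; elim: k => [|k IH] //; rewrite mulSn; apply: Tadd.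
Qed.

Section Apery.

Variables (T : nat -> Prop) (m : nat).

Definition apery_sorted : Prop :=
  forall i wi wj, 1 <= i -> i.+1 <= m - 1 ->
    is_apery T m i wi -> is_apery T m i.+1 wj -> wi < wj.

Lemma apery_le i w s : is_apery T m i w -> T s -> s %% m = i %% m -> w <= s.
Proof. by case=> _ _; apply. Qed.

Lemma apery_uniq i w w' : is_apery T m i w -> is_apery T m i w' -> w = w'.
Proof.
move=> Hw Hw'; have [Tw Rw _] := Hw; have [Tw' Rw' _] := Hw'.
by apply/eqP; rewrite eqn_leq (apery_le Hw Tw') // (apery_le Hw' Tw).
Qed.

Lemma apery_exists i : numerical_semigroup T -> 0 < m -> exists w, is_apery T m i w.
Proof.
case=> _ _ [N HN] m0.
have [|w [[Tw Rw] least]] := @ex_least (fun s => T s /\ s %% m = i %% m).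
  exists (i %% m + N * m); split; last by rewrite addnC modnMDl modn_mod.
  by apply: HN; rewrite (leq_trans (leq_pmulr N m0)) // leq_addl.
by exists w; split=> // s Ts Rs; apply: least.
Qed.

Lemma apery0 w : T 0 -> is_apery T m 0 w -> w = 0.
Proof. by move=> T0 Hw; apply/eqP; rewrite -leqn0 (apery_le Hw T0). Qed.

Lemma apery_summand_mod i a y : is_apery T m i (a + y) -> T y -> 0 < a -> 0 < a %% m.
Proof.
move=> Hw Ty a0; rewrite lt0n; apply/negP=> /eqP am0.
have [_ R _] := Hw.
have : a + y <= y by apply: (apery_le Hw Ty); rewrite -R -modnDml am0.
by rewrite -{2}[y]add0n leq_add2r leqNgt a0.
Qed.

Lemma apery_mod_gt0 i w : T 0 -> is_apery T m i w -> 0 < w -> 0 < i %% m.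
Proof.
move=> T0 Hw w0; have [_ <- _] := Hw.
by apply: (apery_summand_mod (i := i) (y := 0)); rewrite ?addn0.
Qed.

Lemma apery0_lt_apery1 w0 w1 : T 0 -> 1 < m ->
  is_apery T m 0 w0 -> is_apery T m 1 w1 -> w0 < w1.
Proof.
move=> T0 m1 H0 H1; rewrite (apery0 T0 H0) lt0n; apply/eqP=> w10.
by have [_ + _] := H1; rewrite w10 mod0n modn_small.
Qed.

Hypotheses (NT : numerical_semigroup T) (m0 : 0 < m) (sortT : apery_sorted).

Lemma apery_sorted_le j k wj wk : 1 <= j -> j <= k -> k <= m - 1 ->
  is_apery T m j wj -> is_apery T m k wk -> wj <= wk.
Proof.
move=> j1 /subnKC <-; elim: (k - j) wk => [|d IH] wk jdm Hj Hk.
  by rewrite addn0 in Hk; rewrite (apery_uniq Hj Hk).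
have [w Hw] := apery_exists (j + d) NT m0.
apply: leq_trans (IH _ _ Hj Hw) (ltnW _); first lia.
by apply: (sortT _ _ Hw); rewrite -?addnS //; lia.
Qed.

Lemma apery_sorted_pred_lt a c : T a -> 0 < a %% m ->
  is_apery T m (a %% m - 1) c -> c < a.
Proof.
move=> Ta ra Hc; have [T0 _ _] := NT.
case: (ltnP 1 (a %% m)) => [ra1 | ra1].
  have [w Hw] := apery_exists (a %% m) NT m0.
  have Hw' : is_apery T m (a %% m - 1).+1 w by rewrite subn1 prednK.
  have cw : c < w by apply: sortT Hc Hw'; [lia | have := ltn_pmod a m0; lia].
  by rewrite (leq_trans cw) // (apery_le Hw Ta) ?modn_mod.
have a0 : 0 < a by move: ra; case: (posnP a) => [->|//]; rewrite mod0n.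
have -> // : c = 0.
by apply: (apery0 T0); have <- : a %% m - 1 = 0 by lia.
Qed.

End Apery.

Lemma mult_uniq T m m' : is_mult T m -> is_mult T m' -> m = m'.
Proof.
case=> Tm m0 min_m [Tm' m'0 min_m'].
by apply/eqP; rewrite eqn_leq min_m // min_m'.
Qed.

Lemma MANS_mult T m : is_mult T m ->
  MANS T <-> numerical_semigroup T /\ apery_sorted T m.
Proof.
move=> Hm; split=> [[NT sortT] | [NT sortT]]; first exact: (conj NT (sortT m Hm)).
by split=> // m' Hm'; rewrite -(mult_uniq Hm Hm').
Qed.

(* A smaller element s of the same class would split x as s + (x - s), or as
   m + (x - m) when s = 0, with x - s and x - m multiples of m. *)
Lemma msg_apery S m x : numerical_semigroup S -> is_mult S m -> in_msg S x -> x != m ->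
  is_apery S m (x %% m) x.
Proof.
move=> NS [Sm m0 min_m] [Sx x0 irr] xm; split; rewrite ?modn_mod //.
move=> s Ss Rs; rewrite leqNgt; apply/negP=> sx; apply: irr.
have [t [St t0 tx mt]] : exists t, [/\ S t, 0 < t, t < x & m %| x - t].
  case: (posnP s) => [s0 | s0]; last by exists s; rewrite -eqn_mod_dvd ?Rs // ltnW.
  exists m; split=> //; first by rewrite ltn_neqAle eq_sym xm min_m.
  by rewrite dvdn_sub // /dvdn -Rs s0 mod0n.
exists t, (x - t); split=> //; last lia; last by rewrite subn_gt0.
by rewrite -(divnK mt); apply: numerical_mul.
Qed.

Lemma msg_mod_gt0 S m x : numerical_semigroup S -> is_mult S m -> in_msg S x -> x != m ->
  0 < x %% m.
Proof.
move=> NS Hm Hx xm; have [S0 _ _] := NS; have [_ x0 _] := Hx.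
by rewrite -modn_mod; apply: apery_mod_gt0 S0 (msg_apery NS Hm Hx xm) x0.
Qed.

Lemma gen_add A x y : gen A x -> gen A y -> gen A (x + y).
Proof.
by elim=> [|a x' Aa _ IH] Gy; rewrite ?add0n // -addnA; apply: genS (IH Gy).
Qed.

Lemma gen_mul A x k : gen A x -> gen A (k * x).
Proof.
by move=> Gx; elim: k => [|k IH]; [apply: gen0 | rewrite mulSn; apply: gen_add].
Qed.

Lemma gen_sub A B x : {subset A <= B} -> gen A x -> gen B x.
Proof. by move=> sAB; elim=> [|a y Aa _ IH]; [apply: gen0 | apply: genS (sAB _ Aa) IH]. Qed.

Lemma gen_mem A a : a \in A -> gen A a.
Proof. by move=> Aa; rewrite -[a]addn0; apply: genS Aa (gen0 _). Qed.

Lemma gen_decomp A x : gen A x -> 0 < x ->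
  exists a y, [/\ a \in A, gen A y & x = a + y].
Proof. by case=> // a y Aa Gy _; exists a, y. Qed.

Lemma gen_rcons A a x : gen (rcons A a) x ->
  gen A x \/ exists2 y, gen (rcons A a) y & x = a + y.
Proof.
elim=> [|b x' + Gx' IH]; first by left; apply: gen0.
rewrite mem_rcons inE => /orP[/eqP -> | Ab]; first by right; exists x'.
case: IH => [Gx'' | [y Gy ->]]; first by left; apply: genS.
by right; exists (b + y); [apply: genS; rewrite ?mem_rcons ?inE ?Ab ?orbT | rewrite addnCA].
Qed.

Lemma gen_msg S A : numerical_semigroup S -> (forall x, x \in A <-> in_msg S x) ->
  forall x, S x <-> gen A x.
Proof.
case=> S0 Sadd _ msgA x; split; last by elim=> [|a y /msgA [Sa _ _] _]; last exact: Sadd.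
elim/ltn_ind: x => x IH Sx; case: (posnP x) => [-> | x0]; first exact: gen0.
have [[a [b [Sa Sb a0 b0 xab]]] | irr] :=
  classic (exists a b, [/\ S a, S b, 0 < a, 0 < b & x = a + b]).
  by rewrite xab; apply: gen_add; apply: IH => //; lia.
by apply/gen_mem/msgA.
Qed.

(* An element g = 1 mod m gives every residue class r the element r * g. *)
Lemma gen_numerical A m g : 0 < m -> gen A m -> gen A g -> g %% m = 1 ->
  numerical_semigroup (gen A).
Proof.
move=> m0 Gm Gg g1; split; [exact: gen0 | exact: gen_add |].
exists ((m - 1) * g) => x Hx.
have rg : x %% m * g <= x.
  by apply: leq_trans Hx; rewrite leq_mul2r; have := ltn_pmod x m0; lia.
rewrite -(subnKC rg); apply: gen_add; first exact: gen_mul.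
have mx : m %| x - x %% m * g by rewrite -eqn_mod_dvd // -modnMmr g1 muln1 modn_mod.
by rewrite -(divnK mx); apply: gen_mul.
Qed.

Section OneMoreGenerator.

Variables (S : nat -> Prop) (e : nat) (ns : seq nat).
Hypotheses (NS : numerical_semigroup S) (size_ns : size ns = e.+1)
  (sorted_ns : sorted ltn ns) (msg_ns : forall x, x \in ns <-> in_msg S x).

Local Notation m := (nth 0 ns 0).
Local Notation ne := (nth 0 ns e.-1).
Local Notation n := (nth 0 ns e).
Local Notation S' := (gen (take e ns)).

Lemma nth_ns_lt i j : i < j -> j <= e -> nth 0 ns i < nth 0 ns j.
Proof.
by move=> ij je; apply: (sorted_ltn_nth ltn_trans 0 sorted_ns); rewrite // !inE size_ns; lia.
Qed.

Lemma mem_ns_nth i : i <= e -> nth 0 ns i \in ns.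
Proof. by move=> ie; rewrite mem_nth // size_ns. Qed.

Lemma ns_rcons : ns = rcons (take e ns) n.
Proof.
by rewrite -{1}(cat_take_drop e ns) (drop_nth 0) ?size_ns // drop_oversize ?size_ns // cats1.
Qed.

Lemma mem_take_lt_n x : x \in take e ns -> x < n.
Proof.
case/(nthP 0) => k; rewrite size_take size_ns ltnSn => ke <-.
by rewrite nth_take // nth_ns_lt.
Qed.

Lemma S_gen x : S x <-> gen ns x.
Proof. exact: gen_msg. Qed.

Lemma S'_sub x : S' x -> S x.
Proof. by move=> Gx; apply/S_gen; apply: gen_sub Gx => y; apply: mem_take. Qed.

Lemma S_split x : S x -> S' x \/ exists2 y, S y & x = n + y.
Proof.
move/S_gen; rewrite {1}ns_rcons => /gen_rcons [Gx | [y Gy ->]]; first by left.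
by right; exists y; rewrite // S_gen ns_rcons.
Qed.

Lemma S'_lt_n x : S x -> x < n -> S' x.
Proof. by case/S_split => [// | [y _ ->]]; rewrite ltnNge leq_addr. Qed.

Lemma mult_S : is_mult S m.
Proof.
have [Sm m0 _] := (msg_ns m).1 (mem_ns_nth (leq0n e)).
split=> // s /S_gen Gs; case: Gs => // a s' /(nthP 0) [k + <-] _ _.
rewrite size_ns ltnS => ke.
apply: leq_trans (leq_addr _ _); case: k ke => // k ke.
by rewrite ltnW ?nth_ns_lt.
Qed.

Hypothesis e2 : 2 <= e.

Lemma n_msg : in_msg S n.
Proof. exact/msg_ns/mem_ns_nth. Qed.

Lemma ne_msg : in_msg S ne.
Proof. by apply/msg_ns/mem_ns_nth; lia. Qed.

Lemma n_neq_m : n != m.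
Proof. by rewrite gtn_eqF // nth_ns_lt //; lia. Qed.

Lemma ne_neq_m : ne != m.
Proof. by rewrite gtn_eqF // nth_ns_lt //; lia. Qed.

Lemma m_in_take : m \in take e ns.
Proof. by rewrite -(nth_take _ (_ : 0 < e)) ?mem_nth ?size_takel ?size_ns //; lia. Qed.

Lemma mult_S' : is_mult S' m.
Proof.
have [_ m0 min_m] := mult_S.
by split=> [|//|s /S'_sub]; [apply/gen_mem/m_in_take | apply: min_m].
Qed.

Lemma n_notin_S' : ~ S' n.
Proof.
have [_ n0 irr] := n_msg.
move=> /gen_decomp /(_ n0) [a [y [Aa Gy ny]]].
have an := mem_take_lt_n Aa.
have [Sa a0 _] := (msg_ns a).1 (mem_take Aa).
by apply: irr; exists a, y; split=> //; [exact: S'_sub | lia].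
Qed.

Lemma apery_n : is_apery S m (n %% m) n.
Proof. exact: msg_apery NS mult_S n_msg n_neq_m. Qed.

Lemma n_mod_gt0 : 0 < n %% m.
Proof. exact: msg_mod_gt0 NS mult_S n_msg n_neq_m. Qed.

Lemma m_gt0 : 0 < m.
Proof. by have [_ ? _] := mult_S. Qed.

Lemma n_mod_lt_m : n %% m < m.
Proof. exact: ltn_pmod m_gt0. Qed.

Lemma m_gt1 : 1 < m.
Proof. by have := n_mod_gt0; have := n_mod_lt_m; lia. Qed.

Lemma n_in_S : S n.
Proof. by have [] := apery_n. Qed.

Section ForwardDirection.

Hypothesis sortS : apery_sorted S m.

Lemma ne_mod_lt_n_mod : ne %% m < n %% m.
Proof.
have ne_n : ne < n by apply: nth_ns_lt; lia.
have apery_ne := msg_apery NS mult_S ne_msg ne_neq_m.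
rewrite ltnNge; apply/negP=> r_le.
have ne_mod_lt : ne %% m <= m - 1 by have := ltn_pmod ne m_gt0; lia.
have := apery_sorted_le NS m_gt0 sortS n_mod_gt0 r_le ne_mod_lt apery_n apery_ne.
by rewrite leqNgt ne_n.
Qed.

Lemma n_mod_gt1 : 1 < n %% m.
Proof.
by apply: leq_ltn_trans ne_mod_lt_n_mod; apply: msg_mod_gt0 NS mult_S ne_msg ne_neq_m.
Qed.

Lemma apery_pred_n_lt_n c : is_apery S m (n %% m - 1) c -> c < n.
Proof. exact: (apery_sorted_pred_lt NS m_gt0 sortS n_in_S n_mod_gt0). Qed.

Lemma S'_numerical : numerical_semigroup S'.
Proof.
have [g Hg] := apery_exists 1 NS m_gt0.
have [c Hc] := apery_exists (n %% m - 1) NS m_gt0.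
have r1 := n_mod_gt1; have rm := n_mod_lt_m.
have gc : g <= c by apply: (apery_sorted_le NS m_gt0 sortS _ _ _ Hg Hc); lia.
have [Sg Rg _] := Hg.
apply: (gen_numerical m_gt0 (gen_mem m_in_take) (S'_lt_n Sg _)).
  exact: leq_ltn_trans gc (apery_pred_n_lt_n Hc).
by rewrite Rg modn_small //; lia.
Qed.

(* The last summand a of w'(i+1) is a generator of S' below n; the Apery element
   w(a mod m - 1) of S lies below a, hence in S', and replaces a to reach class i. *)
Lemma S'_apery_sorted : apery_sorted S' m.
Proof.
move=> i wi wj i1 im Hi Hj; have [S'j Rj _] := Hj.
have wj0 : 0 < wj.
  by move: Rj; case: (posnP wj) => [-> | //]; rewrite mod0n modn_small //; lia.
have [a [y [Aa S'y wjE]]] := gen_decomp S'j wj0.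
have [Sa a0 _] := (msg_ns a).1 (mem_take Aa).
have ra : 0 < a %% m by rewrite wjE in Hj; apply: apery_summand_mod Hj S'y a0.
have [c Hc] := apery_exists (a %% m - 1) NS m_gt0.
have [Sc Rc _] := Hc.
have ca : c < a := apery_sorted_pred_lt NS m_gt0 sortS Sa ra Hc.
have S'c : S' c := S'_lt_n Sc (ltn_trans ca (mem_take_lt_n Aa)).
have Rc1 : (c + 1) %% m = a %% m by rewrite -modnDml Rc modnDml subnK // modn_mod.
have Rcy : (c + y) %% m = i %% m.
  by apply/eqP; rewrite -(eqn_modDr 1) addnAC -modnDml Rc1 modnDml addn1 -Rj wjE.
by rewrite wjE (leq_ltn_trans (apery_le Hi (gen_add S'c S'y) Rcy)) // ltn_add2r.
Qed.

Lemma S'_apery_pred_lt_n a : is_apery S' m (n %% m - 1) a -> a < n.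
Proof.
move=> Ha; have [c Hc] := apery_exists (n %% m - 1) NS m_gt0.
have [Sc Rc _] := Hc; have cn := apery_pred_n_lt_n Hc.
exact: leq_ltn_trans (apery_le Ha (S'_lt_n Sc cn) Rc) cn.
Qed.

End ForwardDirection.

Lemma S'_apery_gt_n b : is_apery S' m (n %% m) b -> n < b.
Proof.
case=> S'b Rb _; rewrite ltn_neqAle (apery_le apery_n (S'_sub S'b)) ?Rb ?modn_mod // andbT.
by apply/eqP=> nb; apply: n_notin_S'; rewrite nb.
Qed.

Section BackwardDirection.

Hypotheses (NS' : numerical_semigroup S') (sortS' : apery_sorted S' m)
  (pred_lt_n : forall a, is_apery S' m (n %% m - 1) a -> a < n).

Lemma S_apery_lt_n j w : 0 < j -> j < n %% m -> is_apery S m j w -> w < n.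
Proof.
move=> j0 jr Hw; have [u Hu] := apery_exists j NS' m_gt0.
have [a Ha] := apery_exists (n %% m - 1) NS' m_gt0.
have [S'u Ru _] := Hu.
have ua : u <= a.
  by apply: (apery_sorted_le NS' m_gt0 sortS' _ _ _ Hu Ha); have := n_mod_lt_m; lia.
exact: leq_ltn_trans (apery_le Hw (S'_sub S'u) Ru) (leq_ltn_trans ua (pred_lt_n Ha)).
Qed.

(* Strong induction on i, now including i = 0: beyond class n mod m, the
   Apery elements of S not in S' are n plus an Apery element of a smaller class. *)
Lemma S_apery_sorted : apery_sorted S m.
Proof.
suff sorted0 i wi wj : i.+1 <= m - 1 ->
    is_apery S m i wi -> is_apery S m i.+1 wj -> wi < wj.
  by move=> i wi wj _; apply: sorted0.
elim/ltn_ind: i wi wj => i IH wi wj im Hi Hj; have [S0 Sadd _] := NS.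
case: (posnP i) => [i0 | i0].
  by rewrite i0 in Hi Hj; apply: apery0_lt_apery1 S0 m_gt1 Hi Hj.
have [Sj Rj _] := Hj; case: (S_split Sj) => [S'j | [y Sy wjE]].
  have [u Hu] := apery_exists i NS' m_gt0; have [v Hv] := apery_exists i.+1 NS' m_gt0.
  have [S'u Ru _] := Hu.
  apply: leq_ltn_trans (apery_le Hi (S'_sub S'u) Ru) _.
  exact: leq_trans (sortS' i0 im Hu Hv) (apery_le Hv S'j Rj).
case: (ltngtP i.+1 (n %% m)) => [ir | ri | ir].
- by have := S_apery_lt_n (ltn0Sn i) ir Hj; rewrite wjE ltnNge leq_addr.
- have r0 := n_mod_gt0.
  have [p Hp] := apery_exists (i - n %% m) NS m_gt0.
  have [q Hq] := apery_exists (i - n %% m).+1 NS m_gt0.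
  have pq : p < q by apply: IH Hp Hq; lia.
  have [Sp Rp _] := Hp; have [_ _ min_q] := Hq.
  have Rnp : (n + p) %% m = i %% m by rewrite -modnDm Rp modnDmr subnKC.
  have Ry : y %% m = (i - n %% m).+1 %% m.
    apply/eqP; rewrite -(eqn_modDl (n %% m)) !modnDml -wjE Rj -modnDml addnS subnKC //.
  rewrite wjE (leq_ltn_trans (apery_le Hi (Sadd _ _ n_in_S Sp) Rnp)) //.
  by rewrite ltn_add2l (leq_trans pq) // min_q.
- have Hn : is_apery S m i.+1 n by rewrite ir; apply: apery_n.
  by rewrite (apery_uniq Hj Hn); apply: S_apery_lt_n Hi; rewrite -?ir.
Qed.

End BackwardDirection.

End OneMoreGenerator.

Unset Implicit Arguments.

Theorem theorem4p4 (S : nat -> Prop) (e : nat) (ns : seq nat) :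
  numerical_semigroup S ->
  2 <= e ->
  size ns = e.+1 ->
  sorted ltn ns ->
  (forall x, x \in ns <-> in_msg S x) ->
  let n1 := nth 0 ns 0 in
  let ne := nth 0 ns e.-1 in
  let ne1 := nth 0 ns e in
  let S' := gen (take e ns) in
  MANS S <->
  [/\ MANS S',
      ne %% n1 < ne1 %% n1 &
      forall a b, is_apery S' n1 ((ne1 %% n1) - 1) a ->
                  is_apery S' n1 (ne1 %% n1) b ->
                  a < ne1 < b].
Proof.
move=> NS e2 size_ns sorted_ns msg_ns /=.
have [MANS_S S_MANS] := MANS_mult (mult_S NS size_ns sorted_ns msg_ns).
have [MANS_S' S'_MANS] := MANS_mult (mult_S' NS size_ns sorted_ns msg_ns e2).
split=> [/MANS_S [_ sortS] | [/MANS_S' [NS' sortS'] _ around_n]].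
  split=> [|| a b Ha Hb].
  - apply: S'_MANS; split.
      exact: (S'_numerical NS size_ns sorted_ns msg_ns e2 sortS).
    exact: (S'_apery_sorted NS size_ns sorted_ns msg_ns e2 sortS).
  - exact: (ne_mod_lt_n_mod NS size_ns sorted_ns msg_ns e2 sortS).
  - rewrite (S'_apery_pred_lt_n NS size_ns sorted_ns msg_ns e2 sortS Ha).
    exact: (S'_apery_gt_n NS size_ns sorted_ns msg_ns e2 Hb).
apply: S_MANS; split=> //.
apply: (S_apery_sorted NS size_ns sorted_ns msg_ns e2 NS' sortS') => a Ha.
have [b Hb] := apery_exists (nth 0 ns e %% nth 0 ns 0) NS'
  (m_gt0 NS size_ns sorted_ns msg_ns).
by case/andP: (around_n a b Ha Hb).
Qed.
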